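(* If a spectrahedral cone $K\subseteq\mathbb{R}^n$ contains the positive orthant $\mathbb{R}_+^n$, then $K$ admits a normalized spectrahedral representation.
   Context: For real symmetric $k\times k$ matrices $C=\{C_i\}_{i\in[n]}$, $K_C=\{x\in\mathbb{R}^n:\sum_iC_ix_i\succeq0\}$; $C$ is a spectrahedral representation of $K_C$, and a cone of this form is spectrahedral. A representation $K=\{x:\sum_iC_ix_i\succeq0\}$ is normalized if $\sum_{i=1}^nC_i=\mathrm{Id}_k$ and $C_i\succeq0$ for all $i$ (the matrix size $k$ may differ from that of the original representation). *)

From mathcomp Require Import all_boot all_order all_algebra.
From mathcomp Require Import reals.
Set Implicit Arguments. Unset Strict Implicit. Unset Printing Implicit Defensive.
Import Order.TTheory GRing.Theory Num.Theory.
Local Open Scope ring_scope.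

Definition symmx (R : realType) (k : nat) (A : 'M[R]_k) : Prop := A^T = A.

Definition psd (R : realType) (k : nat) (A : 'M[R]_k) : Prop :=
  symmx A /\ forall v : 'cV[R]_k, 0 <= (v^T *m A *m v) 0 0.

Definition pencil (R : realType) (n k : nat) (C : 'I_n -> 'M[R]_k) (x : 'I_n -> R)
  : 'M[R]_k := \sum_(i < n) x i *: C i.

Definition specCone (R : realType) (n k : nat) (C : 'I_n -> 'M[R]_k)
  : (('I_n -> R) -> Prop) := fun x => psd (pencil C x).

Definition normalized (R : realType) (n k : nat) (C : 'I_n -> 'M[R]_k) : Prop :=
  (forall i, psd (C i)) /\ \sum_(i < n) C i = 1%:M.

(* Each C_i is PSD (evaluate the pencil at the unit vectors), hence so is
   S = sum_i C_i.  Factor S = F^T F with F of full row rank, i.e. F P = 1 for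
   some P, and put D_i = P^T C_i P: these are PSD and sum to (F P)^T (F P) = 1.
   Since S (1 - P F) = 0 and the C_i are PSD, every C_i, hence every pencil
   matrix M, satisfies M P F = M; for symmetric M this gives
   M = F^T (P^T M P) F, so M and P^T M P are PSD simultaneously. *)

From mathcomp Require Import all_boot all_order all_algebra.
From mathcomp Require Import reals.
From mathcomp Require Import ring lra.
Set Implicit Arguments. Unset Strict Implicit. Unset Printing Implicit Defensive.
Import Order.TTheory GRing.Theory Num.Theory.
Local Open Scope ring_scope.

Section PsdMatrices.
Variable R : realType.

Definition qform k (A : 'M[R]_k) (v : 'cV[R]_k) : R := (v^T *m A *m v) 0 0.

Lemma psd_qform_ge0 k (A : 'M[R]_k) v : psd A -> 0 <= qform A v.
Proof. by case=> _; apply. Qed.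

Lemma qform_congr k m (A : 'M[R]_k) (Q : 'M[R]_(k, m)) v :
  qform (Q^T *m A *m Q) v = qform A (Q *m v).
Proof. by rewrite /qform trmx_mul !mulmxA. Qed.

Lemma symmx_congr k m (A : 'M[R]_k) (Q : 'M[R]_(k, m)) :
  symmx A -> symmx (Q^T *m A *m Q).
Proof. by move=> sA; rewrite /symmx !trmx_mul trmxK sA mulmxA. Qed.

Lemma psd_congr k m (A : 'M[R]_k) (Q : 'M[R]_(k, m)) :
  psd A -> psd (Q^T *m A *m Q).
Proof.
move=> pA; split=> [|v]; first by apply: symmx_congr; case: pA.
by rewrite -/(qform _ v) qform_congr psd_qform_ge0.
Qed.

Lemma qform_sum (I : finType) k (A : I -> 'M[R]_k) v :
  qform (\sum_i A i) v = \sum_i qform (A i) v.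
Proof. by rewrite /qform mulmx_sumr mulmx_suml summxE. Qed.

Lemma psd_sum (I : finType) k (A : I -> 'M[R]_k) :
  (forall i, psd (A i)) -> psd (\sum_i A i).
Proof.
move=> pA; split=> [|v].
  by rewrite /symmx linear_sum; apply: eq_bigr => i _; case: (pA i).
by rewrite -/(qform _ v) qform_sum sumr_ge0 // => i _; apply: psd_qform_ge0.
Qed.

Lemma qform_block m k (A : 'M[R]_m) (b : 'M[R]_(m, k)) (S : 'M[R]_k) x y :
  qform (block_mx A b b^T S) (col_mx x y) =
  qform A x + 2 * (x^T *m b *m y) 0 0 + qform S y.
Proof.
rewrite /qform tr_col_mx mul_row_block mul_row_col !mulmxDl.
have -> : y^T *m b^T *m x = (x^T *m b *m y)^T by rewrite !trmx_mul trmxK mulmxA.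
by rewrite !mxE; ring.
Qed.

Lemma qform_block1 k a (b : 'rV[R]_k) (S : 'M[R]_k) t y :
  qform (block_mx a%:M b b^T S) (col_mx t%:M y) =
  a * t ^+ 2 + 2 * t * (b *m y) 0 0 + qform S y.
Proof.
rewrite qform_block /qform tr_scalar_mx mul_scalar_mx mul_mx_scalar.
rewrite mul_scalar_mx -scalemxAl !mxE /= mulr1n; ring.
Qed.

Lemma symmx_block1 k a (b c : 'rV[R]_k) (S : 'M[R]_k) :
  symmx (block_mx a%:M b c^T S) -> c = b /\ symmx S.
Proof.
by rewrite /symmx tr_block_mx trmxK => /eq_block_mx[_ cb _ sS].
Qed.

Section Block1.
Variables (k : nat) (a : R) (b : 'rV[R]_k) (S : 'M[R]_k).
Hypothesis pB : psd (block_mx a%:M b b^T S).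

Let qB t y : 0 <= a * t ^+ 2 + 2 * t * (b *m y) 0 0 + qform S y.
Proof. by rewrite -qform_block1 psd_qform_ge0. Qed.

Lemma psd_block1_ge0 : 0 <= a.
Proof. by have := qB 1 0; rewrite mulmx0 mxE /qform trmx0 !mul0mx mxE; lra. Qed.

Lemma psd_block1_drsub : psd S.
Proof.
split; first by case: pB => /symmx_block1[].
by move=> y; have := qB 0 y; rewrite -/(qform S y); lra.
Qed.

Lemma psd_block1_corner0 : a = 0 -> b = 0.
Proof.
move=> a0; apply/rowP => j; rewrite mxE.
have := qB _ (delta_mx j 0); rewrite a0.
set beta := (b *m _) 0 0; have -> : beta = b 0 j by rewrite /beta -colE mxE.
move=> {beta} q; apply/eqP/negPn/negP => bj.
set g := qform S _ in q.
have := q (- (g + 1) / (2 * b 0 j)).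
have -> : 2 * (- (g + 1) / (2 * b 0 j)) * b 0 j = - (g + 1) by field.
lra.
Qed.

Lemma psd_schur1 : 0 < a -> psd (S - a^-1 *: (b^T *m b)).
Proof.
move=> a_gt0; have a_neq0 : a != 0 by rewrite gt_eqF.
split.
  by rewrite /symmx raddfB /= linearZ /= trmx_mul trmxK; case: psd_block1_drsub => ->.
move=> y; rewrite -/(qform _ y); set beta := (b *m y) 0 0.
have -> : qform (S - a^-1 *: (b^T *m b)) y = qform S y - a^-1 * beta ^+ 2.
  rewrite /qform /beta mulmxBr mulmxBl -scalemxAr -scalemxAl.
  have -> : y^T *m (b^T *m b) *m y = (b *m y)^T *m (b *m y) by rewrite trmx_mul !mulmxA.
  by rewrite [b *m y]mx11_scalar tr_scalar_mx -scalar_mxM !mxE /= mulr1n expr2.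
have := qB (- a^-1 * beta) y.
have -> : a * (- a^-1 * beta) ^+ 2 + 2 * (- a^-1 * beta) * beta = - (a^-1 * beta ^+ 2).
  by field.
lra.
Qed.

End Block1.

Lemma psd_block1E k (A : 'M[R]_(1 + k)) :
  psd A -> A = block_mx (ulsubmx A 0 0)%:M (ursubmx A) (ursubmx A)^T (drsubmx A).
Proof.
case=> sA _; rewrite -mx11_scalar.
have := sA; rewrite -{1}(submxK A) /symmx tr_block_mx => /eq_block_mx[_ _ -> _].
by rewrite submxK.
Qed.

(* Cholesky elimination of the first row: a zero pivot forces a zero row, a
   positive pivot leaves the Schur complement to be factored recursively. *)
Lemma psd_factor k (A : 'M[R]_k) : psd A ->
  exists r (F : 'M[R]_(r, k)) (P : 'M[R]_(k, r)), A = F^T *m F /\ F *m P = 1%:M.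
Proof.
elim: k A => [|k IH] A pA; first by exists 0%N, 0, 0; split; apply/matrixP => -[].
move: A pA; change k.+1 with (1 + k)%N => A pA.
have eA := psd_block1E pA; move: eA pA.
move: (ulsubmx A 0 0) (ursubmx A) (drsubmx A) => a b S -> pB.
have := psd_block1_ge0 pB; rewrite le_eqVlt eq_sym => /predU1P[a0|a_gt0].
- have [r [F [P [SF FP]]]] := IH S (psd_block1_drsub pB).
  exists r, (row_mx 0 F), (col_mx 0 P); split; last by rewrite mul_row_col mul0mx add0r.
  rewrite tr_row_mx mul_col_row trmx0 !mul0mx mulmx0 -SF a0 (psd_block1_corner0 pB a0).
  by rewrite trmx0 raddf0.
- have [r [F [P [SF FP]]]] := IH _ (psd_schur1 pB a_gt0).
  set s := Num.sqrt a.
  have s_neq0 : s != 0 by rewrite gt_eqF // sqrtr_gt0.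
  have ss : s * s = a by rewrite -expr2 sqr_sqrtr // ltW.
  exists (1 + r)%N, (block_mx s%:M (s^-1 *: b) 0 F).
  exists (block_mx (s^-1)%:M (- a^-1 *: (b *m P)) 0 P); split.
    rewrite tr_block_mx mulmx_block !trmx0 !mul0mx !mulmx0 ?addr0 ?add0r tr_scalar_mx -SF.
    congr block_mx.
    + by rewrite -scalar_mxM ss.
    + by rewrite mul_scalar_mx scalerA mulfV // scale1r.
    + by rewrite mul_mx_scalar linearZ /= scalerA mulfV // scale1r.
    + rewrite linearZ /= [(s^-1 *: b)^T]linearZ /= -scalemxAl scalerA -invfM ss.
      by rewrite addrC subrK.
  rewrite mulmx_block !mul0mx !mulmx0 ?addr0 ?add0r FP (scalar_mx_block 1 r).
  congr block_mx.
  + by rewrite -scalar_mxM mulfV.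
  + rewrite mul_scalar_mx scalerA -scalemxAl -scalerDl.
    have -> : s * - a^-1 + s^-1 = 0 by rewrite -ss; field.
    by rewrite scale0r.
Qed.

Lemma trmx_mul_self_eq0 m (u : 'cV[R]_m) : (u^T *m u) 0 0 = 0 -> u = 0.
Proof.
rewrite mxE => u0; apply/colP => i; rewrite mxE.
have sq_ge0 (j : 'I_m) : true -> 0 <= u^T 0 j * u j 0 by rewrite mxE -expr2 sqr_ge0.
have := psumr_eq0P sq_ge0 u0 (i := i) isT.
by rewrite mxE -expr2 => /eqP; rewrite sqrf_eq0 => /eqP.
Qed.

Lemma psd_qform_eq0 k (A : 'M[R]_k) z : psd A -> qform A z = 0 -> A *m z = 0.
Proof.
move=> /psd_factor[r [G [_ [-> _]]]].
rewrite /qform !mulmxA -trmx_mul -mulmxA => /trmx_mul_self_eq0 Gz.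
by rewrite -mulmxA Gz mulmx0.
Qed.

Lemma psd_sum_mul_eq0 (I : finType) k m (A : I -> 'M[R]_k) (Z : 'M[R]_(k, m)) :
  (forall i, psd (A i)) -> (\sum_i A i) *m Z = 0 -> forall i, A i *m Z = 0.
Proof.
move=> pA SZ i; apply/matrixP => p j; rewrite [RHS]mxE.
pose z : 'cV_k := Z *m delta_mx j 0.
have qz : \sum_i qform (A i) z = 0.
  rewrite -qform_sum /qform -mulmxA /z [(\sum_i A i) *m _]mulmxA SZ.
  by rewrite !mul0mx mulmx0 mxE.
have qAz : qform (A i) z = 0.
  by apply: (psumr_eq0P _ qz) => // i' _; apply: psd_qform_ge0.
move: (psd_qform_eq0 (pA i) qAz) => /matrixP/(_ p 0).
by rewrite mulmxA -colE !mxE.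
Qed.

Lemma psd_retractE k r (M : 'M[R]_k) (F : 'M[R]_(r, k)) (P : 'M[R]_(k, r)) :
  symmx M -> M *m (P *m F) = M -> psd M <-> psd (P^T *m M *m P).
Proof.
move=> sM MPF; split; first exact: psd_congr.
have FPM : F^T *m P^T *m M = M by rewrite -{1}sM -!trmx_mul MPF sM.
by move=> /(psd_congr F); rewrite !mulmxA FPM -mulmxA MPF.
Qed.

End PsdMatrices.

Section Pencil.
Variables (R : realType) (n k : nat) (C : 'I_n -> 'M[R]_k).

Lemma pencil_sym x : (forall i, symmx (C i)) -> symmx (pencil C x).
Proof.
move=> sC; rewrite /symmx /pencil linear_sum; apply: eq_bigr => i _.
by rewrite linearZ /= sC.
Qed.

Lemma pencil_congr m (Q : 'M[R]_(k, m)) x :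
  pencil (fun i => Q^T *m C i *m Q) x = Q^T *m pencil C x *m Q.
Proof.
rewrite /pencil mulmx_sumr mulmx_suml; apply: eq_bigr => i _.
by rewrite -scalemxAr scalemxAl.
Qed.

Lemma pencil_mulmx_id (Q : 'M[R]_k) x :
  (forall i, C i *m Q = C i) -> pencil C x *m Q = pencil C x.
Proof.
move=> CQ; rewrite /pencil mulmx_suml; apply: eq_bigr => i _.
by rewrite -scalemxAl CQ.
Qed.

Lemma pencil_delta i : pencil C (fun j => (j == i)%:R) = C i.
Proof.
rewrite /pencil (bigD1 i) //= eqxx scale1r big1 ?addr0 // => j /negbTE ->.
by rewrite scale0r.
Qed.

End Pencil.

Theorem lemma12 (R : realType) (n k : nat) (C : 'I_n -> 'M[R]_k) :
  (forall i, symmx (C i)) ->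
  (forall x : 'I_n -> R, (forall i, 0 <= x i) -> specCone C x) ->
  exists (k' : nat) (D : 'I_n -> 'M[R]_k'),
    (forall i, symmx (D i)) /\ normalized D /\
    (forall x : 'I_n -> R, specCone C x <-> specCone D x).
Proof.
move=> sC orthant.
have pC i : psd (C i) by rewrite -pencil_delta; apply: orthant => j; apply: ler0n.
have [r [F [P [SF FP]]]] := psd_factor (psd_sum pC).
have CPF i : C i *m (P *m F) = C i.
  apply/eqP; rewrite -subr_eq0 -{2}[C i]mulmx1 -mulmxBr; apply/eqP.
  apply: psd_sum_mul_eq0 => //.
  by rewrite SF -mulmxA mulmxBr mulmx1 !mulmxA FP mul1mx subrr mulmx0.
exists r, (fun i => P^T *m C i *m P); split; last split.
- by move=> i; apply: symmx_congr.
- split; first by move=> i; apply: psd_congr.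
  by rewrite -mulmx_suml -mulmx_sumr SF !mulmxA -trmx_mul -mulmxA FP trmx1 mul1mx.
- move=> x; rewrite /specCone pencil_congr.
  by apply: psd_retractE; [apply: pencil_sym | apply: pencil_mulmx_id].
Qed.
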